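(* The conditional operation is not smooth in the variety of conditional algebras: there exist a conditional algebra $\langle A,\to\rangle$ and sets $U,V\subseteq\mathrm{Ul}(A)$ such that $U\to^{\sigma}V\neq U\to^{\pi}V$.
   Context: A conditional algebra is a pair $\langle A,\to\rangle$ where $A$ is a Boolean algebra and $\to$ is a binary operation on $A$ such that for all $a,b,c$: $a\to 1=1$; $(a\to b)\wedge(a\to c)=a\to(b\wedge c)$; $(a\vee b)\to c\le (a\to c)\wedge(b\to c)$. $\mathrm{Ul}(A)$ carries the Stone topology with basic clopens $\varphi(a)=\{u:a\in u\}$. For $U,V\subseteq\mathrm{Ul}(A)$: the $\pi$-extension is $U\to^{\pi}V=\bigcap_{(Y,O)}\bigcup\{\varphi(a\to b): Y\subseteq\varphi(a),\ \varphi(b)\subseteq O\}$ over closed $Y\subseteq U$ and open $O\supseteq V$; the $\sigma$-extension is $U\to^{\sigma}V=\bigcup_{(O,Y)}\bigcap\{\varphi(a\to b): \varphi(a)\subseteq O,\ Y\subseteq\varphi(b)\}$ over open $O\supseteq U$ and closed $Y\subseteq V$. The operation is smooth if these always coincide. *)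

(* Boolean algebras are ctbDistrLatticeType's (order.v). *)
From mathcomp Require Import all_boot all_order.
Set Implicit Arguments. Unset Strict Implicit. Unset Printing Implicit Defensive.
Import Order.TTheory.
Local Open Scope order_scope.

Section Conditional.
Context {disp : Order.disp_t} {A : ctbDistrLatticeType disp}.

Definition conditional_algebra (imp : A -> A -> A) : Prop :=
  [/\ forall a, imp a \top = \top,
      forall a b c, Order.meet (imp a b) (imp a c) = imp a (Order.meet b c)
    & forall a b c, imp (Order.join a b) c <= Order.meet (imp a c) (imp b c)].

Definition is_ultrafilter (u : A -> Prop) : Prop :=
  [/\ ~ u \bot,
      u \top,
      forall a b, u a -> a <= b -> u b,
      forall a b, u a -> u b -> u (Order.meet a b)
    & forall a, u a \/ u (~` a)].

Definition Ul := {u : A -> Prop | is_ultrafilter u}.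

Definition phi (a : A) : Ul -> Prop := fun u => proj1_sig u a.

Definition subS (X Y : Ul -> Prop) : Prop := forall u, X u -> Y u.

Definition stone_open (O : Ul -> Prop) : Prop :=
  forall u, O u -> exists a, phi a u /\ subS (phi a) O.

Definition stone_closed (Y : Ul -> Prop) : Prop :=
  stone_open (fun u => ~ Y u).

Definition pi_ext (imp : A -> A -> A) (U V : Ul -> Prop) : Ul -> Prop :=
  fun u => forall Y O, stone_closed Y -> subS Y U -> stone_open O -> subS V O ->
    exists a b, subS Y (phi a) /\ subS (phi b) O /\ phi (imp a b) u.

Definition sigma_ext (imp : A -> A -> A) (U V : Ul -> Prop) : Ul -> Prop :=
  fun u => exists O Y, stone_open O /\ subS U O /\ stone_closed Y /\ subS Y V /\
    forall a b, subS (phi a) O -> subS Y (phi b) -> phi (imp a b) u.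

End Conditional.

(** Fix an upward-closed set of bad elements of a Boolean algebra and let
    [a -> b] be [0] if [b <> 1] and [a] is bad, and [1] otherwise; this is a
    conditional algebra.  Testing with [b = 0], for [V] empty [U ->sigma V] is
    empty as soon as every open neighbourhood of [U] contains some [phi(a)]
    with [a] bad, while [U ->pi V] is the whole space as soon as every closed
    subset of [U] lies in some [phi(a)] with [a] not bad.

    Both happen in the power set of [N + N x N], with [nu] a free ultrafilter
    on [N], [w_n] its copy on the column [{n} x N], [w] the [nu]-limit of the
    [w_n], [U] the principal ultrafilters together with [w], and [a] bad when
    [a] is in [w] and contains some [inl n] with [a] in [w_n].  Every
    neighbourhood of [w] contains some [phi(c)] with [c] in [w], hence in some
    [w_n], and [c + {inl n}] is bad.  A closed [Y] inside [U] avoids every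
    [w_n] and the copy of [nu] on [inl N], so the set [D] of points whose
    principal ultrafilter is in [Y] lies in no [w_n], while the indices [n]
    with [inl n] outside [D] form a set [M] in [nu]; then [D] together with the
    columns over [M] is not bad and its [phi] contains [Y]. *)

From mathcomp Require Import all_boot all_order.
From mathcomp Require Import boolp classical_sets filter.
Import Order.TTheory.
Set Implicit Arguments.
Unset Strict Implicit.
Unset Printing Implicit Defensive.

Section StepConditional.
Context {disp : Order.disp_t} {A : ctbDistrLatticeType disp}.
Variable bad : A -> Prop.
Local Open Scope order_scope.
Local Notation UlA := (@Ul disp A).

Definition step_imp (a b : A) : A :=
  if b == \top then \top else if `[< bad a >] then \bot else \top.

Lemma step_imp_conditional :
  (forall a b, a <= b -> bad a -> bad b) -> conditional_algebra step_imp.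
Proof.
move=> badS; split.
- by move=> a; rewrite /step_imp eqxx.
- move=> a b c; rewrite /step_imp meet_eq1.
  by case: (b == \top); case: (c == \top); rewrite /= ?meet1x ?meetx1 ?meetxx.
- move=> a b c; rewrite /step_imp; case: (c == \top); first by rewrite meetxx.
  case: (asboolP (bad (a `|` b))) => [_|nbad_ab]; first exact: le0x.
  have /asboolPn/negbTE-> : ~ bad a by move/(badS _ _ (leUl a b)).
  have /asboolPn/negbTE-> : ~ bad b by move/(badS _ _ (leUr b a)).
  by rewrite meetxx.
Qed.

Lemma phi_bot (u : UlA) : ~ phi \bot u.
Proof. by case: u => u []. Qed.

Lemma phi_top (u : UlA) : phi \top u.
Proof. by case: u => u []. Qed.

Lemma Ul_bot_neq_top (u : UlA) : \bot != \top :> A.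
Proof.
by apply/eqP => bot_top; apply: (@phi_bot u); rewrite bot_top; apply: phi_top.
Qed.

Lemma step_imp_bot a : \bot != \top :> A ->
  step_imp a \bot = if `[< bad a >] then \bot else \top.
Proof. by move=> /negbTE bot_top; rewrite /step_imp bot_top. Qed.

Lemma pi_ext_step_imp_full (U V : UlA -> Prop) (u : UlA) :
  (forall Y, stone_closed Y -> subS Y U ->
     exists a, subS Y (phi a) /\ ~ bad a) ->
  pi_ext step_imp U V u.
Proof.
move=> closed_good Y O Yc YU _ _; have [a [Ya good_a]] := closed_good Y Yc YU.
exists a, \bot; split; [done | split; first by move=> x /phi_bot].
by rewrite step_imp_bot ?(Ul_bot_neq_top u) // asboolF //; apply: phi_top.
Qed.

Lemma sigma_ext_step_imp_empty (U : UlA -> Prop) (u : UlA) :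
  (forall O, stone_open O -> subS U O -> exists a, subS (phi a) O /\ bad a) ->
  ~ sigma_ext step_imp U (fun _ => False) u.
Proof.
move=> nbhd_bad [O [Y [Oo [UO [_ [YV sigma_u]]]]]].
have [a [aO bad_a]] := nbhd_bad O Oo UO.
have := sigma_u a \bot aO (fun x Yx => False_ind _ (YV x Yx)).
by rewrite step_imp_bot ?(Ul_bot_neq_top u) // asboolT //; apply: phi_bot.
Qed.

End StepConditional.

Local Open Scope classical_set_scope.

Notation set_ultrafilter X := (@is_ultrafilter set_display (set X)).

Lemma set_ultrafilterP X (u : set X -> Prop) :
  ~ u set0 -> u setT -> (forall a b, a `<=` b -> u a -> u b) ->
  (forall a b, u a -> u b -> u (a `&` b)) -> (forall a, u a \/ u (~` a)) ->
  set_ultrafilter X u.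
Proof. by move=> u0 uT uS uI uC; split=> // a b ua /subsetPset /uS; apply. Qed.

Lemma UltraFilter_set_ultrafilter X (F : set_system X) :
  UltraFilter F -> set_ultrafilter X F.
Proof.
move=> FU; apply: set_ultrafilterP => [|||a b|a].
- exact: filter_not_empty.
- exact: filterT.
- by move=> a b; apply: filterS.
- exact: filterI.
- exact: in_ultra_setVsetC.
Qed.

Definition nonprincipal X (u : set X -> Prop) := forall t, ~ u [set t].

Section SetUltrafilter.
Variables (X : Type) (u : set X -> Prop).
Hypothesis u_ultra : set_ultrafilter X u.

Lemma ultra_set0 : ~ u set0.
Proof. by case: u_ultra. Qed.

Lemma ultra_setT : u setT.
Proof. by case: u_ultra. Qed.

Lemma ultraS a b : u a -> a `<=` b -> u b.
Proof. by case: u_ultra => _ _ uS _ _ ua /subsetPset; apply: uS. Qed.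

Lemma ultraI a b : u a -> u b -> u (a `&` b).
Proof. by case: u_ultra => _ _ _ uI _; apply: uI. Qed.

Lemma ultra_setVsetC a : u a \/ u (~` a).
Proof. by case: u_ultra. Qed.

Lemma ultra_nonempty a : u a -> a !=set0.
Proof.
by move=> ua; apply/set0P/eqP => a0; apply: ultra_set0; rewrite -a0.
Qed.

Lemma ultra_setC a : ~ u a -> u (~` a).
Proof. by case: (ultra_setVsetC a). Qed.

Lemma ultra_setCN a : u a -> ~ u (~` a).
Proof.
by move=> ua una; apply: ultra_set0; rewrite -(setICr a); apply: ultraI.
Qed.

Lemma ultraU a b : u (a `|` b) -> u a \/ u b.
Proof.
move=> uab; apply: contrapT => /not_orP[/ultra_setC na /ultra_setC nb].
have [t [[nat nbt] abt]] := ultra_nonempty (ultraI (ultraI na nb) uab).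
by case: abt.
Qed.

Lemma ultra_set1 t : u [set t] -> u = principal_filter t.
Proof.
move=> ut; apply/funext => a; apply/propext; rewrite principal_filterP.
split=> [ua | a_t].
  by have [s [<- a_s]] := ultra_nonempty (ultraI ut ua).
by apply: (ultraS ut) => s ->.
Qed.

End SetUltrafilter.

Lemma ultra_preimage X Y (f : X -> Y) (u : set X -> Prop) :
  set_ultrafilter X u -> set_ultrafilter Y (fun b => u (f @^-1` b)).
Proof.
move=> uU; apply: set_ultrafilterP => [|||a b|a].
- exact: ultra_set0 uU.
- exact: ultra_setT uU.
- by move=> a b ab ua; apply: (ultraS uU ua) => x /ab.
- by move=> ua ub; apply: (ultraI uU ua ub).
- exact: (ultra_setVsetC uU (f @^-1` a)).
Qed.

Lemma nonprincipal_preimage X Y (f : X -> Y) (u : set X -> Prop) :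
  set_ultrafilter X u -> injective f -> nonprincipal u ->
  nonprincipal (fun b => u (f @^-1` b)).
Proof.
move=> uU f_inj u_np y uy; have [x /= fxy] := ultra_nonempty uU uy.
apply: (u_np x); apply: (ultraS uU uy) => x' /= fx'y.
by apply: f_inj; rewrite fxy.
Qed.

Lemma ultra_limit I X (v : set I -> Prop) (us : I -> set X -> Prop) :
  set_ultrafilter I v -> (forall m, set_ultrafilter X (us m)) ->
  set_ultrafilter X (fun b => v (fun m => us m b)).
Proof.
move=> vU usU; apply: set_ultrafilterP => [|||a b|a].
- move=> v0; apply: (ultra_set0 vU).
  by apply: (ultraS vU v0) => m /(ultra_set0 (usU m)).
- by apply: (ultraS vU (ultra_setT vU)) => m _; apply: ultra_setT.
- move=> a b ab va; apply: (ultraS vU va) => m usa.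
  exact: (ultraS (usU m) usa ab).
- move=> va vb; apply: (ultraS vU (ultraI vU va vb)) => m [usa usb].
  exact: (ultraI (usU m) usa usb).
- have [va|vna] := ultra_setVsetC vU (fun m => us m a); first by left.
  by right; apply: (ultraS vU vna) => m /= /(ultra_setC (usU m)).
Qed.

Lemma exists_nonprincipal_ultrafilter_nat :
  exists u, set_ultrafilter nat u /\ nonprincipal u.
Proof.
have [F [FU eventually_F]] := ultraFilterLemma (@eventually_filter).
exists F; split; first exact: UltraFilter_set_ultrafilter.
move=> m Fm; have : F (~` [set m]).
  by apply: eventually_F; exists m.+1 => // n /= mn nm; rewrite nm ltnn in mn.
by move=> /(filterI Fm); rewrite setICr; apply: filter_not_empty.
Qed.

Section StoneSpace.
Variable X : Type.
Local Notation UlX := (@Ul set_display (set X)).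

Definition principal_pt (t : X) : UlX :=
  exist _ _ (UltraFilter_set_ultrafilter (principal_filter_ultra t)).

Definition trace (Y : UlX -> Prop) : set X :=
  fun t => exists2 y, Y y & sval y = principal_filter t.

Lemma trace_notin_closed (Y : UlX -> Prop) (x : UlX) :
  stone_closed Y -> ~ Y x -> ~ sval x (trace Y).
Proof.
move=> Yc Yx x_trace; have [c [xc cY]] := Yc x Yx.
have [t [ct [y Yy yt]]] :=
  ultra_nonempty (proj2_sig x) (ultraI (proj2_sig x) xc x_trace).
by apply: (cY y) Yy; rewrite /phi yt; apply/principal_filterP.
Qed.

End StoneSpace.

Definition grid := (nat + nat * nat)%type.
Local Notation Ugrid := (@Ul set_display (set grid)).

Definition nu : set nat -> Prop :=
  proj1_sig (cid exists_nonprincipal_ultrafilter_nat).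

Lemma nu_ultra : set_ultrafilter nat nu.
Proof. exact: (proj2_sig (cid exists_nonprincipal_ultrafilter_nat)).1. Qed.

Lemma nu_nonprincipal : nonprincipal nu.
Proof. exact: (proj2_sig (cid exists_nonprincipal_ultrafilter_nat)).2. Qed.

Definition cell (n k : nat) : grid := inr (n, k).
Definition column n : set grid := range (cell n).

Lemma cell_inj n : injective (cell n).
Proof. by move=> k k' []. Qed.

Definition col_ultra n (b : set grid) := nu (cell n @^-1` b).
Definition index_ultra (b : set grid) := nu (inl @^-1` b).
Definition lim_ultra (b : set grid) := nu (fun n => col_ultra n b).

Lemma col_ultraU n : set_ultrafilter grid (col_ultra n).
Proof. exact: ultra_preimage nu_ultra. Qed.

Lemma index_ultraU : set_ultrafilter grid index_ultra.
Proof. exact: ultra_preimage nu_ultra. Qed.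

Lemma lim_ultraU : set_ultrafilter grid lim_ultra.
Proof. exact: ultra_limit nu_ultra col_ultraU. Qed.

Definition col_pt n : Ugrid := exist _ _ (col_ultraU n).
Definition index_pt : Ugrid := exist _ _ index_ultraU.
Definition lim_pt : Ugrid := exist _ _ lim_ultraU.

Definition principal_or_lim (x : Ugrid) : Prop :=
  (exists t, sval x = principal_filter t) \/ sval x = lim_ultra.

Definition anchored (a : set grid) : Prop :=
  lim_ultra a /\ exists n, a (inl n) /\ col_ultra n a.

Lemma anchoredS a b : (a <= b)%O -> anchored a -> anchored b.
Proof.
move=> /subsetPset ab [lim_a [n [a_n col_a]]]; split.
  exact: (ultraS lim_ultraU lim_a ab).
by exists n; split; [apply: ab | exact: (ultraS (col_ultraU n) col_a ab)].
Qed.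

Lemma col_ultra_column n : col_ultra n (column n).
Proof. by apply: (ultraS nu_ultra (ultra_setT nu_ultra)) => k _; exists k. Qed.

Lemma lim_ultra_bigcup_column (N : set nat) :
  nu N -> lim_ultra (\bigcup_(n in N) column n).
Proof.
move=> nu_N; apply: (ultraS nu_ultra nu_N) => n Nn.
by apply: (ultraS (col_ultraU n) (col_ultra_column n)) => t; exists n.
Qed.

Lemma notin_principal_or_lim (x : Ugrid) b :
  nonprincipal (sval x) -> sval x b -> ~ lim_ultra b -> ~ principal_or_lim x.
Proof.
move=> x_np xb lim_b [[t xt]|x_lim]; last by apply: lim_b; rewrite -x_lim.
by apply: (x_np t); rewrite xt; apply/principal_filterP.
Qed.

Lemma col_pt_notin n : ~ principal_or_lim (col_pt n).
Proof.
apply: (@notin_principal_or_lim (col_pt n) (column n) _ (col_ultra_column n)).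
  exact: nonprincipal_preimage nu_ultra (@cell_inj n) nu_nonprincipal.
move=> lim_col; apply: (@nu_nonprincipal n); apply: (ultraS nu_ultra lim_col).
by move=> m /= /(ultra_nonempty nu_ultra) [k [k' _ [-> _]]].
Qed.

Lemma index_pt_notin : ~ principal_or_lim index_pt.
Proof.
have inl_inj : injective (@inl nat (nat * nat)) by move=> n n' [].
apply: (notin_principal_or_lim (b := range inl)).
- exact: nonprincipal_preimage nu_ultra inl_inj nu_nonprincipal.
- by apply: (ultraS nu_ultra (ultra_setT nu_ultra)) => n _; exists n.
- move=> lim_inl; apply: (ultra_set0 nu_ultra).
  apply: (ultraS nu_ultra lim_inl).
  by move=> m /= /(ultra_nonempty nu_ultra) [k [n]].
Qed.

Lemma open_sup_anchored (O : Ugrid -> Prop) :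
  stone_open O -> subS principal_or_lim O ->
  exists a, subS (phi a) O /\ anchored a.
Proof.
move=> Oo UO; have [c [lim_c cO]] := Oo lim_pt (UO lim_pt (or_intror erefl)).
have [n col_c] := ultra_nonempty nu_ultra lim_c.
exists (c `|` [set inl n]); split.
  move=> x /(ultraU (proj2_sig x)) [xc|xn]; first exact: cO.
  by apply: UO; left; exists (inl n); exact: (ultra_set1 (proj2_sig x) xn).
split; first by apply: (ultraS lim_ultraU lim_c) => t; left.
by exists n; split; [right | apply: (ultraS (col_ultraU n) col_c) => t; left].
Qed.

Lemma closed_sub_unanchored (Y : Ugrid -> Prop) :
  stone_closed Y -> subS Y principal_or_lim ->
  exists a, subS Y (phi a) /\ ~ anchored a.
Proof.
move=> Yc YU; have [Y_lim|nY_lim] := pselect (Y lim_pt); last first.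
  have [c [lim_c cY]] := Yc lim_pt nY_lim.
  exists (~` c); split; last by move=> [] /(ultra_setCN lim_ultraU lim_c).
  move=> x Yx; have [xc|//] := ultra_setVsetC (proj2_sig x) c.
  by case: (cY x xc).
set D := trace Y; set N := ~` [set n | D (inl n)].
have nu_N : nu N.
  apply: (ultra_setC nu_ultra); apply: (trace_notin_closed (x := index_pt) Yc).
  by move=> /YU; apply: index_pt_notin.
exists (D `|` \bigcup_(n in N) column n); split.
  move=> x /[dup] Yx /YU [[t xt]|x_lim].
    by rewrite /phi xt; apply/principal_filterP; left; exists x.
  rewrite /phi x_lim.
  by apply: (ultraS lim_ultraU (lim_ultra_bigcup_column nu_N)) => t; right.
move=> [_ [n [[Dn|[m _ [k _ //]]] col_a]]].
have /(ultraU (col_ultraU n)) [col_D|col_N] := col_a.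
  apply: (trace_notin_closed Yc (x := col_pt n) _ col_D).
  by move=> /YU /col_pt_notin.
have [k [m Nm [k' _ [mn _]]]] := ultra_nonempty nu_ultra col_N.
by rewrite mn in Nm.
Qed.

Theorem theorem2p17 :
  exists (d : Order.disp_t) (A : ctbDistrLatticeType d) (imp : A -> A -> A),
    conditional_algebra imp /\
    exists U V : @Ul d A -> Prop, sigma_ext imp U V <> pi_ext imp U V.
Proof.
exists set_display, (set grid : ctbDistrLatticeType _), (step_imp anchored).
split; first exact: step_imp_conditional anchoredS.
exists principal_or_lim, (fun _ => False) => sigma_pi.
pose u := principal_pt (inl 0 : grid).
apply: (sigma_ext_step_imp_empty (u := u) open_sup_anchored).
by rewrite sigma_pi; apply: pi_ext_step_imp_full closed_sub_unanchored.
Qed.
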